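(* Let $\nu\in[0,1]$, let $\|u\|_C=[(1-\nu)\|u\|_1^2+\nu\|u\|_2^2]^{1/2}$ on $\mathbb{R}^N$ and $\|\cdot\|_R=\|\cdot\|_2$ on $\mathbb{R}^P$, and let $F(A)=(1-\nu)\sum_{i,j=1}^N|A_{ij}|+\nu\operatorname{tr}A$ for symmetric $A\in\mathbb{R}^{N\times N}$ (so that $F(uu^\top)=\|u\|_C^2$). Then for every $X\in\mathbb{R}^{N\times P}$, $$\|X\|_D\ \ge\ \inf\Big\{\tfrac12F(A)+\tfrac12\operatorname{tr}\big(X^\top A^{+}X\big)\;:\;A\in\mathbb{R}^{N\times N},\ A\succeq0,\ \operatorname{range}(X)\subseteq\operatorname{range}(A)\Big\},$$ where $A^+$ is the Moore–Penrose pseudo-inverse.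
   Context: For $M\ge 1$ and $X\in\mathbb{R}^{N\times P}$, $f_D^M(X)=\inf\{\tfrac12\sum_{m=1}^M(\|u_m\|_C^2+\|v_m\|_R^2): U=[u_1,\dots,u_M]\in\mathbb{R}^{N\times M}, V=[v_1,\dots,v_M]\in\mathbb{R}^{P\times M}, X=UV^\top\}$ (with $\inf\emptyset=+\infty$), and the decomposition norm is $\|X\|_D=\lim_{M\to\infty}f_D^M(X)$. *)

(* classical real numbers. Matrices are functions nat -> nat -> R,
   only the entries with indices in range (i < N, j < P) are ever inspected. *)
From Stdlib Require Import Reals Classical ClassicalEpsilon.
Open Scope R_scope.

Fixpoint fsum (n : nat) (f : nat -> R) : R :=
  match n with O => 0 | S k => fsum k f + f k end.

Definition vec := nat -> R.
Definition mat := nat -> nat -> R.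

Definition norm1 (N : nat) (u : vec) : R := fsum N (fun i => Rabs (u i)).
Definition norm2 (N : nat) (u : vec) : R := sqrt (fsum N (fun i => u i ^ 2)).

Definition normC (nu : R) (N : nat) (u : vec) : R :=
  sqrt ((1 - nu) * norm1 N u ^ 2 + nu * norm2 N u ^ 2).
Definition normR (P : nat) (v : vec) : R := norm2 P v.

Definition col (A : mat) (m : nat) : vec := fun i => A i m.

Definition decomp_value (nu : R) (N P M : nat) (X : mat) (v : R) : Prop :=
  exists U V : mat,
    (forall i j, (i < N)%nat -> (j < P)%nat ->
        X i j = fsum M (fun m => U i m * V j m)) /\
    v = / 2 * fsum M (fun m => normC nu N (col U m) ^ 2 + normR P (col V m) ^ 2).

Definition is_inf (S : R -> Prop) (m : R) : Prop :=
  (forall x, S x -> m <= x) /\ (forall m', (forall x, S x -> m' <= x) -> m' <= m).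

Definition Rinf (S : R -> Prop) : R := epsilon (inhabits 0) (is_inf S).

(* extended real infimum: None stands for +infinity (inf of the empty set) *)
Definition fD (nu : R) (N P M : nat) (X : mat) : option R :=
  epsilon (inhabits None) (fun o => match o with
    | None => ~ (exists v, decomp_value nu N P M X v)
    | Some m => (exists v, decomp_value nu N P M X v) /\ is_inf (decomp_value nu N P M X) m
    end).

Definition toR (o : option R) : R := match o with Some x => x | None => 0 end.

(* ||X||_D = lim_{M -> oo} f_D^M(X)  (the sequence is eventually finite) *)
Definition Dnorm (nu : R) (N P : nat) (X : mat) : R :=
  epsilon (inhabits 0) (fun d =>
    (exists M0, forall M, (M0 <= M)%nat -> fD nu N P M X <> None) /\
    Un_cv (fun M => toR (fD nu N P M X)) d).

Definition mmul (N : nat) (A B : mat) : mat := fun i j => fsum N (fun k => A i k * B k j).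
Definition mtr (A : mat) : mat := fun i j => A j i.
Definition meq (N : nat) (A B : mat) : Prop :=
  forall i j, (i < N)%nat -> (j < N)%nat -> A i j = B i j.

Definition symmetric (N : nat) (A : mat) : Prop := meq N A (mtr A).

Definition psd (N : nat) (A : mat) : Prop :=
  symmetric N A /\
  forall v : vec, 0 <= fsum N (fun i => fsum N (fun j => v i * A i j * v j)).

(* Moore-Penrose conditions; they characterize A^+ uniquely *)
Definition is_pinv (N : nat) (A B : mat) : Prop :=
  meq N (mmul N (mmul N A B) A) A /\
  meq N (mmul N (mmul N B A) B) B /\
  meq N (mtr (mmul N A B)) (mmul N A B) /\
  meq N (mtr (mmul N B A)) (mmul N B A).

Definition pinv (N : nat) (A : mat) : mat := epsilon (inhabits (fun _ _ => 0)) (is_pinv N A).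

Definition range_incl (N P : nat) (X A : mat) : Prop :=
  forall w : vec, exists z : vec, forall i, (i < N)%nat ->
    fsum P (fun j => X i j * w j) = fsum N (fun k => A i k * z k).

Definition trace (N : nat) (A : mat) : R := fsum N (fun i => A i i).

Definition Ffun (nu : R) (N : nat) (A : mat) : R :=
  (1 - nu) * fsum N (fun i => fsum N (fun j => Rabs (A i j))) + nu * trace N A.

Definition trXtBX (N P : nat) (X B : mat) : R :=
  fsum P (fun p => fsum N (fun i => fsum N (fun k => X i p * B i k * X k p))).

(* Given a decomposition X = U V^T with M columns, the Gram matrix A = U U^T is
   feasible for the right-hand infimum and its objective is at most the value
   of the decomposition:
   - A is positive semidefinite and range(X) = range(U V^T) is contained in
     range(A), because U = A A^+ U;
   - F(A) <= sum_m ||u_m||_C^2, by the triangle inequality for the l1 part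
     and equality for the trace part;
   - tr(X^T A^+ X) <= ||V||_F^2 = sum_m ||v_m||_2^2: writing U y = A w with
     w = A^+ U y and t = U^T w, one has (U y)^T A^+ (U y) = |t|^2 = <t, y>,
     so |y|^2 - |t|^2 = |t - y|^2 >= 0.
   Hence every decomposition value dominates the infimum, and so does their
   limit ||X||_D. *)

From Pilot Require Import Defs.
From Stdlib Require Import Reals Lra Lia ClassicalEpsilon.
Set Warnings "-notation-overridden,-ambiguous-paths".
From mathcomp Require Import all_boot all_order all_algebra Rstruct.
Import GRing.Theory Num.Theory.
Open Scope R_scope.

Lemma fsumE n f : fsum n f = (\sum_(i < n) f i)%R.
Proof. by elim: n => [|n IH] /=; rewrite ?big_ord0 // big_ord_recr IH. Qed.

Lemma fsum_S n f : fsum n.+1 f = fsum n f + f n.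
Proof. by []. Qed.

Lemma fsum_ext n f g : (forall i, (i < n)%coq_nat -> f i = g i) -> fsum n f = fsum n g.
Proof. by move=> h; rewrite !fsumE; apply: eq_bigr => i _; apply/h/ssrnat.ltP. Qed.

Lemma fsum_zero n : fsum n (fun _ => 0) = 0.
Proof. by elim: n => [|n /= ->] //; rewrite Rplus_0_r. Qed.

Lemma fsum_plus n f g : fsum n (fun i => f i + g i) = fsum n f + fsum n g.
Proof. by rewrite !fsumE big_split. Qed.

Lemma fsum_scal n c f : fsum n (fun i => c * f i) = c * fsum n f.
Proof. by rewrite !fsumE RmultE mulr_sumr. Qed.

Lemma fsum_le n f g : (forall i, (i < n)%N -> f i <= g i) -> fsum n f <= fsum n g.
Proof. by move=> h; rewrite !fsumE; apply/RleP/ler_sum => i _; apply/RleP/h. Qed.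

Lemma fsum_ge0 n f : (forall i, (i < n)%N -> 0 <= f i) -> 0 <= fsum n f.
Proof. by move=> h; rewrite -(fsum_zero n); apply: fsum_le. Qed.

Lemma fsum_abs n f : Rabs (fsum n f) <= fsum n (fun i => Rabs (f i)).
Proof. by rewrite !fsumE RabsE; apply/RleP; apply: ler_norm_sum. Qed.

Lemma fsum_swap n m (f : nat -> nat -> R) :
  fsum n (fun i => fsum m (fun j => f i j)) = fsum m (fun j => fsum n (fun i => f i j)).
Proof.
rewrite !fsumE; under eq_bigr do rewrite fsumE; under [RHS]eq_bigr do rewrite fsumE.
exact: exchange_big.
Qed.

Lemma sq_fsum n f : fsum n f ^ 2 = fsum n (fun i => fsum n (fun j => f i * f j)).
Proof.
rewrite !fsumE RpowE expr2 mulr_suml; apply: eq_bigr => i _.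
by rewrite fsumE mulr_sumr.
Qed.

Definition basis (k : nat) : vec := fun j => if j == k then 1 else 0.

Lemma fsum_basis n k f : (k < n)%N -> fsum n (fun j => f j * basis k j) = f k.
Proof.
move=> hk; rewrite fsumE (bigD1 (Ordinal hk)) //= /basis eqxx Rmult_1_r big1 ?addr0 //.
by move=> i; rewrite -val_eqE /= => /negbTE ->; rewrite Rmult_0_r.
Qed.

Lemma is_inf_exists (S : R -> Prop) :
  (exists x, S x) -> (exists l, forall x, S x -> l <= x) -> exists m, is_inf S m.
Proof.
move=> [x0 Sx0] [l hl].
have [m [ub lub]] := completeness (fun y => forall x, S x -> y <= x)
  (ex_intro _ x0 (fun y hy => hy x0 Sx0)) (ex_intro _ l hl).
by exists m; split=> [x Sx | m' hm']; [apply: lub => y; apply | apply: ub].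
Qed.

Lemma Rinf_spec (S : R -> Prop) :
  (exists x, S x) -> (exists l, forall x, S x -> l <= x) -> is_inf S (Rinf S).
Proof. by move=> hne hlb; apply: epsilon_spec; apply: is_inf_exists. Qed.

Lemma lim_ge_eventually (u : nat -> R) l L K :
  Un_cv u l -> (forall n, (K <= n)%coq_nat -> L <= u n) -> L <= l.
Proof.
move=> cvu hL; apply: (@Rle_cv_lim (fun _ => L) (fun n => u (n + K)%coq_nat)).
- by move=> n; apply: hL; lia.
- by move=> e he; exists O => n _; rewrite /R_dist Rminus_diag Rabs_R0.
- exact: CV_shift'.
Qed.

Lemma eventually_decreasing_cv (u : nat -> R) K :
  (forall n, (K <= n)%coq_nat -> u (S n) <= u n /\ 0 <= u n) -> exists l, Un_cv u l.
Proof.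
move=> hu.
have hdec : Un_decreasing (fun n => u (n + K)%coq_nat).
  by move=> n /=; case: (hu (n + K)%coq_nat ltac:(lia)).
have hlb : has_lb (fun n => u (n + K)%coq_nat).
  exists 0 => _ [n ->]; rewrite /opp_seq.
  by have [_ ?] := hu (n + K)%coq_nat ltac:(lia); lra.
have [l cvl] := decreasing_cv _ hdec hlb.
by exists l; apply: CV_shift cvl.
Qed.

Lemma norms_zero nu N P : normC nu N (fun _ => 0) = 0 /\ normR P (fun _ => 0) = 0.
Proof.
rewrite /normC /normR /norm1 /norm2 Rabs_R0 pow_i ?fsum_zero ?sqrt_0 //; last by lia.
by rewrite pow_i ?Rmult_0_r ?Rplus_0_r ?sqrt_0 //; lia.
Qed.

(* The values f_D^M(X) are finite from M = N on and nonincreasing in M, so the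
   limit defining ||X||_D exists and is above any common lower bound. *)
Section DecompositionNorm.
Variables (nu : R) (N P : nat) (X : mat).

Lemma decomp_value_ge0 M v : decomp_value nu N P M X v -> 0 <= v.
Proof.
move=> [U [V [_ ->]]]; apply: Rmult_le_pos; first lra.
by apply: fsum_ge0 => m _; apply: Rplus_le_le_0_compat; apply: pow2_ge_0.
Qed.

(* With M >= N columns, X = I X^T is a decomposition. *)
Lemma decomp_value_exists M : (N <= M)%N -> exists v, decomp_value nu N P M X v.
Proof.
move=> hNM; eexists; exists (fun i m => basis i m), (fun j m => X m j); split=> // i j hi _.
rewrite (fsum_ext _ _ (fun m => X m j * basis i m)) ?fsum_basis //.
- exact: leq_trans (introT ssrnat.ltP hi) hNM.
- by move=> m _; rewrite Rmult_comm.
Qed.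

(* Padding a decomposition with a zero column keeps its value. *)
Lemma decomp_value_succ M v : decomp_value nu N P M X v -> decomp_value nu N P M.+1 X v.
Proof.
move=> [U [V [hX ->]]].
exists (fun i m => if (m < M)%N then U i m else 0), (fun j m => if (m < M)%N then V j m else 0).
have [zC zR] := norms_zero nu N P.
split=> [i j hi hj | ]; rewrite fsum_S; cbv beta; rewrite ?ltnn.
- rewrite Rmult_0_l Rplus_0_r hX //.
  by apply: fsum_ext => m /ssrnat.ltP ->.
- rewrite /Defs.col ltnn zC zR pow_i ?Rplus_0_r; last lia.
  by congr (_ * _); apply: fsum_ext => m /ssrnat.ltP hm; rewrite hm.
Qed.

Lemma fD_finite M : (exists v, decomp_value nu N P M X v) ->
  exists m, fD nu N P M X = Some m /\ is_inf (decomp_value nu N P M X) m.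
Proof.
move=> hex; have [m hm] := is_inf_exists _ hex (ex_intro _ 0 (@decomp_value_ge0 M)).
have := epsilon_spec (inhabits None) (fun o => match o with
    | None => ~ (exists v, decomp_value nu N P M X v)
    | Some m => (exists v, decomp_value nu N P M X v) /\ is_inf (decomp_value nu N P M X) m
    end) (ex_intro _ (Some m) (conj hex hm)).
rewrite /fD; case: (epsilon _ _) => [m' [_ hm'] | /(_ hex) []].
by exists m'.
Qed.

Lemma Dnorm_ge L : (forall M v, decomp_value nu N P M X v -> L <= v) -> L <= Dnorm nu N P X.
Proof.
move=> hL; pose a M := toR (fD nu N P M X).
have ha M : (N <= M)%coq_nat ->
    fD nu N P M X <> None /\ is_inf (decomp_value nu N P M X) (a M).
  move=> /ssrnat.leP hM; rewrite /a.
  by have [m [-> hm]] := @fD_finite M (@decomp_value_exists M hM).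
have [l cvl] : exists l, Un_cv a l.
  apply: (@eventually_decreasing_cv a N) => M hM.
  have [_ [_ glb]] := ha M hM; have [_ [lb _]] := ha M.+1 ltac:(lia).
  split; apply: glb => v hv; [apply: lb; exact: decomp_value_succ | exact: decomp_value_ge0 hv].
have [_ cvD] : (exists M0, forall M, (M0 <= M)%coq_nat -> fD nu N P M X <> None) /\
    Un_cv a (Dnorm nu N P X).
  apply: (epsilon_spec (inhabits 0) (fun d => _ /\ Un_cv a d)).
  by exists l; split=> //; exists N => M /ha [].
apply: (@lim_ge_eventually a _ L N cvD) => M /ha [_ [_ glb]].
by apply: glb => v; apply: hL.
Qed.

End DecompositionNorm.

Section RealMatrices.
Context {F : realFieldType}.
Local Open Scope ring_scope.

(* tr(W^T W) is a sum of squares. *)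
Lemma tr_gram_ge0 m n (W : 'M[F]_(m, n)) : 0 <= \tr (W^T *m W).
Proof.
apply: sumr_ge0 => i _; rewrite mxE; apply: sumr_ge0 => k _.
by rewrite mxE -expr2 sqr_ge0.
Qed.

Lemma mulmx_tr_eq0 m n (W : 'M[F]_(m, n)) : W *m W^T = 0 -> W = 0.
Proof.
move=> hW; apply/matrixP => i j; apply/eqP; rewrite mxE -sqrf_eq0 expr2; apply/eqP.
have hsum : \sum_k W i k * W^T k i = 0.
  by have := congr1 (fun M : 'M_m => M i i) hW; rewrite !mxE.
have hge0 k : true -> 0 <= W i k * W^T k i by rewrite mxE -expr2 sqr_ge0.
by have := psumr_eq0P hge0 hsum (i := j) isT; rewrite mxE.
Qed.

(* For symmetric A, A A W = 0 forces A W = 0, as (A W)^T (A W) = W^T A A W. *)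
Lemma sym_mulmx_cancel n p (A : 'M[F]_n) (W : 'M[F]_(n, p)) :
  A^T = A -> A *m (A *m W) = 0 -> A *m W = 0.
Proof.
move=> hA hAAW; apply: trmx_inj; rewrite trmx0; apply: mulmx_tr_eq0.
by rewrite trmxK trmx_mul hA -mulmxA hAAW mulmx0.
Qed.

(* A symmetric A has a symmetric G with A G A^2 = A: symmetrize a generalized
   inverse of A^2 and cancel one factor A. *)
Lemma sym_ginv_sqr n (A : 'M[F]_n) :
  A^T = A -> exists2 G : 'M[F]_n, G^T = G & A *m G *m A *m A = A.
Proof.
move=> hA; set G0 := pinvmx (A *m A).
have hG0 : A *m A *m G0 *m (A *m A) = A *m A by apply: mulmxKpV; apply: submx_refl.
clearbody G0; rewrite !mulmxA in hG0.
have hG0T : A *m A *m G0^T *m A *m A = A *m A.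
  by move: (congr1 trmx hG0); rewrite !trmx_mul hA !mulmxA.
set G := G0 *m (A *m A) *m G0^T.
exists G; first by rewrite /G !trmx_mul trmxK hA !mulmxA.
have hAAGAA : A *m A *m G *m A *m A = A *m A by rewrite /G !mulmxA hG0 hG0T.
clearbody G.
have : A *m (A *m (G *m (A *m A) - 1%:M)) = 0.
  by rewrite mulmxA mulmxBr mulmx1 !mulmxA hAAGAA subrr.
move=> /(sym_mulmx_cancel _ _ _ _ hA) /eqP; rewrite mulmxBr mulmx1 subr_eq0 => /eqP.
by rewrite !mulmxA.
Qed.

(* Every symmetric matrix has a Moore-Penrose inverse, namely A G A G A. *)
Lemma sym_pinv_exists n (A : 'M[F]_n) : A^T = A -> exists B : 'M[F]_n,
  [/\ A *m B *m A = A, B *m A *m B = B, (A *m B)^T = A *m B & (B *m A)^T = B *m A].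
Proof.
move=> hA; have [G hG hAGAA] := sym_ginv_sqr _ _ hA.
have hAAGA : A *m A *m G *m A = A.
  by move: (congr1 trmx hAGAA); rewrite !trmx_mul hA hG !mulmxA.
have hR p (Z : 'M[F]_(p, n)) : Z *m A *m G *m A *m A = Z *m A.
  by rewrite -[in RHS]hAGAA !mulmxA.
have hAGA : (A *m G *m A)^T = A *m G *m A by rewrite !trmx_mul hA hG mulmxA.
exists (A *m G *m A *m G *m A).
have hAB : A *m (A *m G *m A *m G *m A) = A *m G *m A by rewrite !mulmxA hAAGA.
have hBA : A *m G *m A *m G *m A *m A = A *m G *m A by rewrite hR.
split.
- by rewrite hAB hAGAA.
- by rewrite hBA !mulmxA hAGAA.
- by rewrite hAB hAGA.
- by rewrite hBA hAGA.
Qed.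

End RealMatrices.

Section GeneralizedInverse.
Context {F : realFieldType} {n : nat} {A B : 'M[F]_n}.
Local Open Scope ring_scope.
Hypotheses (hA : A^T = A) (hABA : A *m B *m A = A).

Lemma ginv_form_range p (Z : 'M[F]_(n, p)) :
  (A *m Z)^T *m B *m (A *m Z) = Z^T *m A *m Z.
Proof. by rewrite trmx_mul hA !mulmxA -(mulmxA _ A B) -(mulmxA _ (A *m B) A) hABA. Qed.

(* If A = U U^T then range(U) = range(A), in the form A B U = U. *)
Lemma gram_ginv_range m (U : 'M[F]_(n, m)) : A = U *m U^T -> A *m B *m U = U.
Proof.
move=> hU; apply/eqP; rewrite eq_sym -subr_eq0; apply/eqP.
have -> : U - A *m B *m U = (1%:M - A *m B) *m U by rewrite mulmxBl mul1mx.
apply: mulmx_tr_eq0.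
by rewrite trmx_mul mulmxA -(mulmxA _ U) -hU mulmxBl mul1mx hABA subrr mul0mx.
Qed.

(* If A = U U^T then tr((U Y)^T B (U Y)) <= tr(Y^T Y): with W = B U Y and
   T = U^T W one has U Y = A W, the left side is tr(T^T T) = tr(T^T Y), and
   0 <= tr((T - Y)^T (T - Y)) = tr(Y^T Y) - tr(T^T T). *)
Lemma gram_ginv_tr_le m p (U : 'M[F]_(n, m)) (Y : 'M[F]_(m, p)) : A = U *m U^T ->
  \tr ((U *m Y)^T *m B *m (U *m Y)) <= \tr (Y^T *m Y).
Proof.
move=> hU; set W := B *m (U *m Y); set T := U^T *m W.
have hUY : U *m Y = A *m W by rewrite /W !mulmxA (gram_ginv_range _ _ hU).
clearbody W.
have hTT : (U *m Y)^T *m B *m (U *m Y) = T^T *m T.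
  by rewrite hUY ginv_form_range hU /T trmx_mul trmxK !mulmxA.
have hTY : T^T *m Y = T^T *m T by rewrite /T trmx_mul trmxK -mulmxA hUY hU !mulmxA.
have hYT : \tr (Y^T *m T) = \tr (T^T *m Y) by rewrite -mxtrace_tr trmx_mul trmxK.
have := tr_gram_ge0 _ _ (T - Y).
rewrite hTT !raddfB /= !mulmxBl !raddfB /= hYT hTY.
by rewrite subrr add0r opprK addrC subr_ge0.
Qed.

End GeneralizedInverse.

Definition tomx (m n : nat) (A : mat) : 'M[R]_(m, n) := \matrix_(i, j) A i j.

Definition colv (n : nat) (x : vec) : 'cV[R]_n := \col_i x i.

Definition frommx {m n : nat} (M : 'M[R]_(m, n)) : mat := fun i j =>
  match (insub i : option 'I_m), (insub j : option 'I_n) with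
  | Some i', Some j' => M i' j'
  | _, _ => 0
  end.

Lemma tomxK m n (M : 'M[R]_(m, n)) : tomx m n (frommx M) = M.
Proof. by apply/matrixP => i j; rewrite mxE /frommx !valK. Qed.

Lemma colv_frommx n (z : 'cV[R]_n) : colv n (fun k => frommx z k 0%N) = z.
Proof. by rewrite -[RHS]tomxK; apply/matrixP => i j; rewrite (ord1 j) !mxE. Qed.

Lemma meq_tomx n A B : meq n A B <-> tomx n n A = tomx n n B.
Proof.
split=> [h | h i j /ssrnat.ltP hi /ssrnat.ltP hj].
  by apply/matrixP => i j; rewrite !mxE; apply: h; apply/ssrnat.ltP; apply: ltn_ord.
by have := congr1 (fun M : 'M_n => M (Ordinal hi) (Ordinal hj)) h; rewrite !mxE.
Qed.

Lemma tomx_mmul n A B : tomx n n (mmul n A B) = (tomx n n A *m tomx n n B)%R.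
Proof. by apply/matrixP => i j; rewrite !mxE /mmul fsumE; apply: eq_bigr => k _; rewrite !mxE. Qed.

Lemma tomx_mtr n A : tomx n n (mtr A) = ((tomx n n A)^T)%R.
Proof. by apply/matrixP => i j; rewrite !mxE. Qed.

Lemma symmetric_tomx n A : Defs.symmetric n A -> ((tomx n n A)^T)%R = tomx n n A.
Proof. by move=> /meq_tomx; rewrite tomx_mtr. Qed.

Lemma pinv_spec n A : Defs.symmetric n A -> is_pinv n A (pinv n A).
Proof.
move=> /symmetric_tomx hA; apply: epsilon_spec.
have [B [h1 h2 h3 h4]] := sym_pinv_exists _ _ hA.
exists (frommx B); split; [|split; [|split]]; apply/meq_tomx.
- by rewrite !tomx_mmul tomxK.
- by rewrite !tomx_mmul tomxK.
- by rewrite tomx_mtr !tomx_mmul tomxK.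
- by rewrite tomx_mtr !tomx_mmul tomxK.
Qed.

Lemma pinv_ginv n A : Defs.symmetric n A ->
  (tomx n n A *m tomx n n (pinv n A) *m tomx n n A)%R = tomx n n A.
Proof. by move=> /pinv_spec [/meq_tomx]; rewrite !tomx_mmul. Qed.

Lemma mulmx_colvE m n (M : mat) (x : vec) (i : 'I_m) :
  fsum n (fun k => M i k * x k) = (tomx m n M *m colv n x)%R i ord0.
Proof. by rewrite mxE fsumE; apply: eq_bigr => k _; rewrite !mxE. Qed.

Definition qform (n : nat) (x : vec) (B : mat) : R :=
  fsum n (fun i => fsum n (fun k => x i * B i k * x k)).

Lemma qformE n x B : qform n x B = (\tr ((colv n x)^T *m tomx n n B *m colv n x))%R.
Proof.
rewrite /qform /mxtrace big_ord1 -mulmxA mxE fsumE; apply: eq_bigr => i _.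
rewrite !mxE fsumE mulr_sumr; apply: eq_bigr => k _.
by rewrite !mxE mulrA.
Qed.

Lemma sqnormE n (y : vec) : fsum n (fun m => y m ^ 2) = (\tr ((colv n y)^T *m colv n y))%R.
Proof.
rewrite /mxtrace big_ord1 mxE fsumE; apply: eq_bigr => m _.
by rewrite !mxE RpowE expr2.
Qed.

Lemma range_inclP N P X A :
  (forall w, exists z : 'cV[R]_N, (tomx N P X *m colv P w)%R = (tomx N N A *m z)%R) ->
  range_incl N P X A.
Proof.
move=> h w; have [z hz] := h w; exists (fun k => frommx z k 0%N) => i /ssrnat.ltP hi.
by rewrite (mulmx_colvE _ _ _ _ (Ordinal hi)) (mulmx_colvE _ _ _ _ (Ordinal hi)) colv_frommx hz.
Qed.

Definition gram (M : nat) (U : mat) : mat := fun i k => fsum M (fun m => U i m * U k m).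

Lemma tomx_gram N M U : tomx N N (gram M U) = (tomx N M U *m (tomx N M U)^T)%R.
Proof. by apply/matrixP => i k; rewrite !mxE /gram fsumE; apply: eq_bigr => m _; rewrite !mxE. Qed.

Lemma gram_sym N M U : Defs.symmetric N (gram M U).
Proof. by move=> i j _ _; apply: fsum_ext => m _; rewrite Rmult_comm. Qed.

Lemma gram_psd N M U : psd N (gram M U).
Proof.
split=> [|v]; first exact: gram_sym.
change (0 <= qform N v (gram M U)); rewrite qformE tomx_gram mulmxA -mulmxA.
rewrite -[X in (X *m _)%R]trmxK trmx_mul trmxK.
by apply/RleP; apply: tr_gram_ge0.
Qed.

Lemma psd_diag N A k : psd N A -> (k < N)%N -> 0 <= A k k.
Proof.
move=> [_ hA] hk; have := hA (basis k).
rewrite (fsum_ext _ _ (fun i => A i k * basis k i)) ?fsum_basis // => i _.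
by rewrite fsum_basis // Rmult_comm.
Qed.

Lemma Ffun_ge0 nu N A : 0 <= nu <= 1 -> psd N A -> 0 <= Ffun nu N A.
Proof.
move=> hnu hA; rewrite /Ffun /trace.
have h1 : 0 <= fsum N (fun i => fsum N (fun j => Rabs (A i j))).
  by apply: fsum_ge0 => i _; apply: fsum_ge0 => j _; apply: Rabs_pos.
have h2 : 0 <= fsum N (fun i => A i i) by apply: fsum_ge0 => i; apply: psd_diag.
by apply: Rplus_le_le_0_compat; apply: Rmult_le_pos; lra.
Qed.

(* Columns of X lie in range(A), where A^+ acts as an inverse. *)
Lemma trXtBX_pinv_ge0 N P X A :
  psd N A -> range_incl N P X A -> 0 <= trXtBX N P X (pinv N A).
Proof.
move=> [hsym hA] hr; apply: fsum_ge0 => p hp.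
have [z hz] := hr (basis p).
have hcol : colv N (Defs.col X p) = (tomx N N A *m colv N z)%R.
  apply/matrixP => i j; rewrite (ord1 j) -mulmx_colvE mxE -hz; last exact/ssrnat.ltP.
  by rewrite fsum_basis.
change (0 <= qform N (Defs.col X p) (pinv N A)).
rewrite qformE hcol ginv_form_range ?pinv_ginv ?symmetric_tomx // -qformE.
exact: hA.
Qed.

Lemma normC_sq nu N u : 0 <= nu <= 1 ->
  normC nu N u ^ 2 = (1 - nu) * norm1 N u ^ 2 + nu * fsum N (fun i => u i ^ 2).
Proof.
move=> hnu; have h2 : 0 <= fsum N (fun i => u i ^ 2) by apply: fsum_ge0 => i _; apply: pow2_ge_0.
rewrite /normC /norm2 pow2_sqrt // pow2_sqrt //.
by apply: Rplus_le_le_0_compat; apply: Rmult_le_pos; try lra; apply: pow2_ge_0.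
Qed.

Lemma Ffun_gram_le nu N M U : 0 <= nu <= 1 ->
  Ffun nu N (gram M U) <= fsum M (fun m => normC nu N (Defs.col U m) ^ 2).
Proof.
move=> hnu.
rewrite (fsum_ext _ _ (fun m => (1 - nu) * norm1 N (Defs.col U m) ^ 2
    + nu * fsum N (fun i => U i m ^ 2))); last by move=> m _; apply: normC_sq.
rewrite fsum_plus !fsum_scal /Ffun /trace /gram.
apply: Rplus_le_compat.
- apply: Rmult_le_compat_l; first lra.
  rewrite (fsum_ext _ (fun m => norm1 N (Defs.col U m) ^ 2)
    (fun m => fsum N (fun i => fsum N (fun j => Rabs (U i m) * Rabs (U j m)))));
    last by move=> m _; rewrite /norm1 sq_fsum.
  rewrite [in X in _ <= X]fsum_swap; apply: fsum_le => i _.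
  rewrite [in X in _ <= X]fsum_swap; apply: fsum_le => j _.
  apply: Rle_trans (fsum_abs _ _) _; apply: fsum_le => m _.
  by rewrite Rabs_mult; apply: Rle_refl.
- right; rewrite fsum_swap; congr (_ * _).
  by apply: fsum_ext => m _; apply: fsum_ext => i _; ring.
Qed.

Lemma normR_sq_sum P M V :
  fsum M (fun m => normR P (Defs.col V m) ^ 2) = fsum P (fun p => fsum M (fun m => V p m ^ 2)).
Proof.
rewrite fsum_swap; apply: fsum_ext => m _; apply: pow2_sqrt.
by apply: fsum_ge0 => p _; apply: pow2_ge_0.
Qed.

Section GramOfDecomposition.
Variables (N P M : nat) (X U V : mat).
Hypothesis hX : forall i j, (i < N)%coq_nat -> (j < P)%coq_nat ->
  X i j = fsum M (fun m => U i m * V j m).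

Let A := tomx N N (gram M U).
Let B := tomx N N (pinv N (gram M U)).

Fact gram_tomx_sym : (A^T)%R = A.
Proof. by apply: symmetric_tomx; apply: gram_sym. Qed.

Fact gram_tomx_ginv : (A *m B *m A)%R = A.
Proof. by apply: pinv_ginv; apply: gram_sym. Qed.

Lemma decomp_col p : (p < P)%N ->
  colv N (Defs.col X p) = (tomx N M U *m colv M (fun m => V p m))%R.
Proof.
move=> hp; apply/matrixP => i j; rewrite (ord1 j) -mulmx_colvE mxE.
by apply: hX; apply/ssrnat.ltP.
Qed.

Lemma decomp_mx : tomx N P X = (tomx N M U *m (tomx P M V)^T)%R.
Proof.
apply/matrixP => i j; rewrite !mxE hX; try exact/ssrnat.ltP.
by rewrite fsumE; apply: eq_bigr => m _; rewrite !mxE.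
Qed.

(* X w = U V^T w = A (B U V^T w). *)
Lemma gram_range : range_incl N P X (gram M U).
Proof.
apply: range_inclP => w; exists (B *m (tomx N M U *m ((tomx P M V)^T *m colv P w)))%R.
rewrite decomp_mx !mulmxA.
by rewrite (gram_ginv_range gram_tomx_ginv _ _ (tomx_gram N M U)).
Qed.

Lemma gram_trXtBX_le :
  trXtBX N P X (pinv N (gram M U)) <= fsum P (fun p => fsum M (fun m => V p m ^ 2)).
Proof.
apply: fsum_le => p hp.
change (qform N (Defs.col X p) (pinv N (gram M U)) <= fsum M (fun m => V p m ^ 2)).
rewrite qformE sqnormE decomp_col //; apply/RleP.
exact: (gram_ginv_tr_le gram_tomx_sym gram_tomx_ginv _ _ _ _ (tomx_gram N M U)).
Qed.

End GramOfDecomposition.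

Theorem mainTheorem6 (nu : R) (hnu : 0 <= nu <= 1) (N P : nat) (X : mat) :
  Dnorm nu N P X >=
  Rinf (fun v => exists A : mat,
          psd N A /\ range_incl N P X A /\
          v = / 2 * Ffun nu N A + / 2 * trXtBX N P X (pinv N A)).
Proof.
set S := fun v => exists A : mat, _.
have feasible M U V : (forall i j, (i < N)%coq_nat -> (j < P)%coq_nat ->
    X i j = fsum M (fun m => U i m * V j m)) ->
    S (/ 2 * Ffun nu N (gram M U) + / 2 * trXtBX N P X (pinv N (gram M U))).
  by move=> hX; exists (gram M U); split; [apply: gram_psd | split; [apply: gram_range hX |]].
have [lbS _] : is_inf S (Rinf S).
  apply: Rinf_spec.
  - have [v [U [V [hX _]]]] := decomp_value_exists nu N P X N (leqnn N).
    by eexists; apply: feasible hX.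
  - exists 0 => _ [A [hA [hr ->]]].
    have := Ffun_ge0 nu N A hnu hA; have := trXtBX_pinv_ge0 N P X A hA hr; lra.
apply: Rle_ge; apply: Dnorm_ge => M v [U [V [hX ->]]].
apply: Rle_trans (lbS _ (feasible M U V hX)) _.
rewrite fsum_plus normR_sq_sum.
have := Ffun_gram_le nu N M U hnu; have := gram_trXtBX_le N P M X U V hX; lra.
Qed.
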